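(* The pruning map $UT^1(\Sigma)\to T^1(\Sigma)$, $X\mapsto\overline{X}$, is a surjective $(2,1,1,0)$-morphism from $UT^1(\Sigma)$ with unpruned multiplication $\times$, unpruned $( * )$, unpruned $(+)$ and the trivial tree as distinguished identity, to $T^1(\Sigma)$ with pruned multiplication, $*$, $+$ and the trivial tree as distinguished identity. In particular, for all $X,Y\in UT^1(\Sigma)$: $\overline{X\times Y}=\overline{X}\,\overline{Y}$, $\overline{X^{(+)}}=\overline{X}^+$ and $\overline{X^{( * )}}=\overline{X}^*$.
   Context: Let $\Sigma$ be a set. A $\Sigma$-tree is a finite directed graph whose underlying undirected graph is a tree, edges labelled by elements of $\Sigma$, with distinguished start and end vertices such that there is a (possibly empty) directed path from the start vertex to the end vertex. A tree with one vertex is trivial. A morphism $X\to Y$ maps vertices to vertices and edges to edges, preserving initial vertex, terminal vertex and label of each edge, and maps start/end vertex of $X$ to start/end vertex of $Y$; an isomorphism is a morphism bijective on vertices and edges. A retraction is an idempotent morphism $X\to X$, its image (a subtree with the same start and end vertices) being a retract; $X$ is pruned if it has no non-identity retraction. Every tree $X$ has a pruned retract, unique up to isomorphism; its isomorphism type is $\overline{X}$. $UT^1(\Sigma)$ is the set of isomorphism types of $\Sigma$-trees and $T^1(\Sigma)$ that of pruned $\Sigma$-trees. Unpruned operations on $UT^1(\Sigma)$: $X\times Y$ is obtained from disjoint copies of $X$ and $Y$ by identifying the end vertex of $X$ with the start vertex of $Y$, taking start vertex that of $X$ and end vertex that of $Y$; $X^{(+)}$ has the same graph and start vertex as $X$ but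 end vertex equal to its start vertex; $X^{( * )}$ has the same graph and end vertex as $X$ but start vertex equal to its end vertex. Pruned operations on $T^1(\Sigma)$: $XY=\overline{X\times Y}$, $X^+=\overline{X^{(+)}}$, $X^*=\overline{X^{( * )}}$. *)

From HB Require Import structures.
From mathcomp Require Import all_boot.
Unset Printing Implicit Defensive.

Record sgraph (S : Type) := SGraph {
  gV : finType;
  gE : finType;
  gsrc : gE -> gV;
  gtgt : gE -> gV;
  glab : gE -> S;
  gstart : gV;
  gend : gV }.
Arguments SGraph {S} gV gE gsrc gtgt glab gstart gend.
Arguments gV {S}. Arguments gE {S}.
Arguments gsrc {S s}. Arguments gtgt {S s}. Arguments glab {S s}.
Arguments gstart {S}. Arguments gend {S}.

Definition uadj {S : Type} (G : sgraph S) : rel (gV G) := fun u v =>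
  [exists e, ((gsrc e == u) && (gtgt e == v)) || ((gsrc e == v) && (gtgt e == u))].
Definition diradj {S : Type} (G : sgraph S) : rel (gV G) := fun u v =>
  [exists e, (gsrc e == u) && (gtgt e == v)].

Definition tr_from {S : Type} (G : sgraph S) (x : gE G * bool) : gV G :=
  if x.2 then gsrc x.1 else gtgt x.1.
Definition tr_to {S : Type} (G : sgraph S) (x : gE G * bool) : gV G :=
  if x.2 then gtgt x.1 else gsrc x.1.

Definition ucycle {S : Type} (G : sgraph S) (x : gE G * bool) (s : seq (gE G * bool)) : bool :=
  [&& path (fun a b => tr_to G a == tr_from G b) x s,
      tr_to G (last x s) == tr_from G x
    & uniq (map fst (x :: s))].

Definition uacyclic {S : Type} (G : sgraph S) : Prop := forall x s, ~~ ucycle G x s.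
Definition uconnected {S : Type} (G : sgraph S) : Prop := forall u v, connect (uadj G) u v.

Definition is_tree {S : Type} (G : sgraph S) : Prop :=
  [/\ uconnected G, uacyclic G & connect (diradj G) (gstart G) (gend G)].

Definition is_hom {S : Type} (X Y : sgraph S) (fv : gV X -> gV Y) (fe : gE X -> gE Y) : Prop :=
  [/\ forall e, gsrc (fe e) = fv (gsrc e),
      forall e, gtgt (fe e) = fv (gtgt e),
      forall e, glab (fe e) = glab e,
      fv (gstart X) = gstart Y
    & fv (gend X) = gend Y].

Definition iso {S : Type} (X Y : sgraph S) : Prop :=
  exists fv fe, [/\ is_hom X Y fv fe, bijective fv & bijective fe].

Definition is_retraction {S : Type} (X : sgraph S) (rv : gV X -> gV X) (re : gE X -> gE X) : Prop :=
  [/\ is_hom X X rv re, rv \o rv =1 rv & re \o re =1 re].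

Definition pruned {S : Type} (X : sgraph S) : Prop :=
  forall rv re, is_retraction X rv re -> rv =1 id /\ re =1 id.

(* Y is (isomorphic to) a retract of X: Y embeds in X, by an injective
   morphism, exactly onto the image of a retraction of X. *)
Definition retract_of {S : Type} (Y X : sgraph S) : Prop :=
  exists rv re iv ie,
    [/\ is_retraction X rv re, is_hom Y X iv ie, injective iv /\ injective ie,
        (forall v, (exists y, iv y = v) <-> (exists w, rv w = v))
      & (forall e, (exists d, ie d = e) <-> (exists f, re f = e))].

(* P is a pruned retract of X (so P represents the class \overline{X}) *)
Definition pruned_retract {S : Type} (X P : sgraph S) : Prop := pruned P /\ retract_of P X.

Definition prodV {S : Type} (X Y : sgraph S) : finType :=
  (gV X + {y : gV Y | y != gstart Y})%type.
Definition inj2 {S : Type} (X Y : sgraph S) (y : gV Y) : prodV X Y :=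
  match insub y with Some y' => inr y' | None => inl (gend X) end.

Definition gprod {S : Type} (X Y : sgraph S) : sgraph S :=
  @SGraph S (prodV X Y) (gE X + gE Y)%type
    (fun e => match e with inl e => inl (gsrc e) | inr e => inj2 X Y (gsrc e) end)
    (fun e => match e with inl e => inl (gtgt e) | inr e => inj2 X Y (gtgt e) end)
    (fun e => match e with inl e => glab e | inr e => glab e end)
    (inl (gstart X)) (inj2 X Y (gend Y)).

Definition gplus {S : Type} (X : sgraph S) : sgraph S :=
  SGraph (gV X) (gE X) (@gsrc S X) (@gtgt S X) (@glab S X) (gstart X) (gstart X).
Definition gstar {S : Type} (X : sgraph S) : sgraph S :=
  SGraph (gV X) (gE X) (@gsrc S X) (@gtgt S X) (@glab S X) (gend X) (gend X).

Definition gtriv (S : Type) : sgraph S :=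
  @SGraph S unit void (fun e => match e with end) (fun e => match e with end)
    (fun e => match e with end) tt tt.

From mathcomp Require Import all_boot.

(* Pruned graphs that map homomorphically into each other are isomorphic: the
   composite endomorphism of a pruned graph has an idempotent power, i.e. a
   retraction, which must be the identity, so the endomorphism is bijective.
   A graph and any of its retracts map into each other, and the unpruned
   product, plus and star send homomorphisms to homomorphisms; hence each side of
   every identity is a pruned retract of one of two homomorphically equivalent
   graphs. *)

Set Implicit Arguments.

Lemma iter_idempotent {T : finType} (f : T -> T) :
  exists2 m, 0 < m & forall x, iter m f (iter m f x) = iter m f x.
Proof.
have [a [d d_gt0 loop]] : exists a, exists2 d, 0 < d & iter (d + a) f =1 iter a f.
  pose F (k : 'I_#|{ffun T -> T}|.+1) := [ffun x => iter k f x].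
  have /injectivePn[i [j neq_ij eqF]] : ~~ injectiveb F.
    by apply/injectiveP => /leq_card; rewrite card_ord ltnn.
  wlog lt_ij : i j neq_ij eqF / i < j.
    move=> wlog_lt; case: (ltngtP i j) => [|gt_ij|/val_inj eq_ij].
    - exact: wlog_lt.
    - by apply: (wlog_lt j i) gt_ij; [rewrite eq_sym | apply: esym].
    - by rewrite eq_ij eqxx in neq_ij.
  exists i, (j - i); first by rewrite subn_gt0.
  move=> x; rewrite subnK; last exact: ltnW.
  by have /ffunP/(_ x) := eqF; rewrite !ffunE => ->.
have shift n : a <= n -> iter (d + n) f =1 iter n f.
  move=> le_an x; rewrite -(subnK le_an) addnA [d + _]addnC -addnA.
  by rewrite iterD loop -iterD.
have periodic k n : a <= n -> iter (k * d + n) f =1 iter n f.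
  move=> le_an; elim: k => [|k IH] x; first by rewrite mul0n.
  by rewrite mulSn -addnA shift ?IH // (leq_trans le_an) ?leq_addl.
(* [a.+1 * d] is a multiple of the period [d] that lies beyond the preperiod [a]. *)
exists (a.+1 * d); first by rewrite muln_gt0.
have le_am : a <= a.+1 * d by rewrite (leq_trans (leqnSn a)) ?leq_pmulr.
by move=> x; rewrite -iterD periodic.
Qed.

Lemma bij_of_comp_bij (A B : Type) (f : A -> B) (g : B -> A) :
  bijective (g \o f) -> bijective (f \o g) -> bijective f.
Proof.
move=> [h gfK hK] [k _ kK]; have inj_f : injective f.
  by move=> x y eq_fxy; rewrite -[x]gfK -[y]gfK /= eq_fxy.
by exists (g \o k) => [x|y]; [apply: inj_f | ]; apply: kK.
Qed.

Section Homomorphisms.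
Variable S : Type.
Implicit Types X Y Z P Q : sgraph S.

Definition homomorphic X Y : Prop := exists fv fe, is_hom X Y fv fe.

Definition hom_equiv X Y : Prop := homomorphic X Y /\ homomorphic Y X.

Lemma is_hom_id X : is_hom X X id id.
Proof. by split. Qed.

Lemma is_hom_comp X Y Z fv fe gv ge :
  is_hom X Y fv fe -> is_hom Y Z gv ge -> is_hom X Z (gv \o fv) (ge \o fe).
Proof.
case=> f1 f2 f3 f4 f5 [g1 g2 g3 g4 g5].
by split=> [e|e|e||] /=; rewrite ?g1 ?g2 ?g3 ?f1 ?f2 ?f3 ?f4 ?f5.
Qed.

Lemma is_hom_iter X fv fe n :
  is_hom X X fv fe -> is_hom X X (iter n fv) (iter n fe).
Proof.
by move=> hf; elim: n => [|n IH]; [exact: is_hom_id | exact: is_hom_comp IH hf].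
Qed.

Lemma homomorphic_trans Y X Z :
  homomorphic X Y -> homomorphic Y Z -> homomorphic X Z.
Proof.
by move=> [fv [fe hf]] [gv [ge hg]]; exists (gv \o fv), (ge \o fe); apply: is_hom_comp.
Qed.

Lemma hom_equiv_refl X : hom_equiv X X.
Proof. by split; exists id, id. Qed.

Lemma hom_equiv_sym X Y : hom_equiv X Y -> hom_equiv Y X.
Proof. by move=> [XY YX]; split. Qed.

Lemma hom_equiv_trans Y X Z : hom_equiv X Y -> hom_equiv Y Z -> hom_equiv X Z.
Proof. by move=> [XY YX] [YZ ZY]; split; apply: homomorphic_trans; eassumption. Qed.

Lemma retract_of_refl X : retract_of X X.
Proof. by exists id, id, id, id; split; split. Qed.

(* The projection onto the retract is the retraction read back through the
   injective embedding. *)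
Lemma retract_hom_equiv Y X : retract_of Y X -> hom_equiv X Y.
Proof.
case=> rv [re [iv [ie [[[rsrc rtgt rlab rstart rend] _ _] hi [inj_iv inj_ie] imV imE]]]].
have /fin_all_exists[pv pvE] v : exists y, iv y = rv v by apply/imV; exists v.
have /fin_all_exists[pe peE] e : exists d, ie d = re e by apply/imE; exists e.
case: (hi) => isrc itgt ilab istart iend.
split; last by exists iv, ie.
exists pv, pe; split=> [e|e|e||]; try apply: inj_iv.
- by rewrite -isrc peE rsrc pvE.
- by rewrite -itgt peE rtgt pvE.
- by rewrite -ilab peE rlab.
- by rewrite pvE rstart istart.
- by rewrite pvE rend iend.
Qed.

Lemma pruned_endo_bij P fv fe :
  pruned P -> is_hom P P fv fe -> bijective fv /\ bijective fe.
Proof.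
move=> prP hf.
pose F (x : gV P + gE P) := match x with inl v => inl (fv v) | inr e => inr (fe e) end.
have [m m_gt0 idemF] := iter_idempotent F.
have iterFv k v : iter k F (inl v) = inl (iter k fv v) by elim: k => //= k ->.
have iterFe k e : iter k F (inr e) = inr (iter k fe e) by elim: k => //= k ->.
have [idv ide] : iter m fv =1 id /\ iter m fe =1 id.
  apply: prP; split; first exact: is_hom_iter.
  - by move=> v; have := idemF (inl v); rewrite !iterFv => -[].
  - by move=> e; have := idemF (inr e); rewrite !iterFe => -[].
rewrite -(prednK m_gt0) in idv ide.
by split; [exists (iter m.-1 fv) | exists (iter m.-1 fe)] => x;
  rewrite -?iterS -?iterSr ?idv ?ide.
Qed.

Lemma pruned_hom_equiv_iso P Q : pruned P -> pruned Q -> hom_equiv P Q -> iso P Q.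
Proof.
move=> prP prQ [[fv [fe hf]] [gv [ge hg]]].
have [bv be] := pruned_endo_bij prP (is_hom_comp hf hg).
have [bv' be'] := pruned_endo_bij prQ (is_hom_comp hg hf).
by exists fv, fe; split; [| exact: bij_of_comp_bij bv bv' | exact: bij_of_comp_bij be be'].
Qed.

Lemma pruned_retract_iso X Y P Q :
  hom_equiv X Y -> pruned_retract X Q -> pruned_retract Y P -> iso Q P.
Proof.
move=> XY [prQ rQ] [prP rP]; apply: pruned_hom_equiv_iso => //.
exact: hom_equiv_trans (hom_equiv_sym (retract_hom_equiv rQ))
                       (hom_equiv_trans XY (retract_hom_equiv rP)).
Qed.

Lemma pruned_gtriv : pruned (gtriv S).
Proof. by move=> rv re _; split=> -[]; case: (rv tt). Qed.

Definition gprod_vmap {X Y X' Y'} (fv : gV X -> gV X') (gv : gV Y -> gV Y') :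
    gV (gprod X Y) -> gV (gprod X' Y') :=
  fun v => match v with inl x => inl (fv x) | inr y => inj2 X' Y' (gv (val y)) end.

Definition gprod_emap {X Y X' Y'} (fe : gE X -> gE X') (ge : gE Y -> gE Y') :
    gE (gprod X Y) -> gE (gprod X' Y') :=
  fun e => match e with inl d => inl (fe d) | inr d => inr (ge d) end.

Lemma gprod_vmap_inj2 X Y X' Y' fv fe gv ge :
  is_hom X X' fv fe -> is_hom Y Y' gv ge ->
  forall y, gprod_vmap fv gv (inj2 X Y y) = inj2 X' Y' (gv y).
Proof.
move=> [_ _ _ _ fend] [_ _ _ gstart _] y; rewrite /inj2.
case: insubP => [y' _ <- // | /negPn/eqP ->] /=.
by rewrite gstart insubF ?eqxx //= fend.
Qed.

Lemma is_hom_gprod X Y X' Y' fv fe gv ge :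
  is_hom X X' fv fe -> is_hom Y Y' gv ge ->
  is_hom (gprod X Y) (gprod X' Y') (gprod_vmap fv gv) (gprod_emap fe ge).
Proof.
move=> hf hg; have vmap_inj2 := gprod_vmap_inj2 hf hg.
case: hf hg => f1 f2 f3 f4 f5 [g1 g2 g3 g4 g5].
by split=> [[]e|[]e|[]e||] /=; rewrite ?f1 ?f2 ?f3 ?vmap_inj2 ?g1 ?g2 ?g3 ?f4 ?g5.
Qed.

Lemma homomorphic_gprod X Y X' Y' :
  homomorphic X X' -> homomorphic Y Y' -> homomorphic (gprod X Y) (gprod X' Y').
Proof.
move=> [fv [fe hf]] [gv [ge hg]].
by exists (gprod_vmap fv gv), (gprod_emap fe ge); apply: is_hom_gprod.
Qed.

Lemma homomorphic_gplus X Y : homomorphic X Y -> homomorphic (gplus X) (gplus Y).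
Proof. by move=> [fv [fe [? ? ? ? ?]]]; exists fv, fe. Qed.

Lemma homomorphic_gstar X Y : homomorphic X Y -> homomorphic (gstar X) (gstar Y).
Proof. by move=> [fv [fe [? ? ? ? ?]]]; exists fv, fe. Qed.

Lemma hom_equiv_gprod X Y X' Y' :
  hom_equiv X X' -> hom_equiv Y Y' -> hom_equiv (gprod X Y) (gprod X' Y').
Proof. by move=> [? ?] [? ?]; split; apply: homomorphic_gprod. Qed.

Lemma hom_equiv_gplus X Y : hom_equiv X Y -> hom_equiv (gplus X) (gplus Y).
Proof. by move=> [? ?]; split; apply: homomorphic_gplus. Qed.

Lemma hom_equiv_gstar X Y : hom_equiv X Y -> hom_equiv (gstar X) (gstar Y).
Proof. by move=> [? ?]; split; apply: homomorphic_gstar. Qed.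

End Homomorphisms.

Theorem theorem4p5 (S : Type) :
  [/\ (* surjective onto pruned trees *)
      (forall P : sgraph S, is_tree P -> pruned P ->
         exists X : sgraph S, is_tree X /\ pruned_retract X P),
      (* \overline{X x Y} = \overline{X} \overline{Y} *)
      (forall X Y : sgraph S, is_tree X -> is_tree Y ->
         forall PX PY P Q : sgraph S,
           pruned_retract X PX -> pruned_retract Y PY ->
           pruned_retract (gprod PX PY) P ->
           pruned_retract (gprod X Y) Q -> iso Q P),
      (* \overline{X^{(+)}} = \overline{X}^+ *)
      (forall X : sgraph S, is_tree X ->
         forall PX P Q : sgraph S,
           pruned_retract X PX -> pruned_retract (gplus PX) P ->
           pruned_retract (gplus X) Q -> iso Q P),
      (* \overline{X^{( * )}} = \overline{X}^* *)
      (forall X : sgraph S, is_tree X ->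
         forall PX P Q : sgraph S,
           pruned_retract X PX -> pruned_retract (gstar PX) P ->
           pruned_retract (gstar X) Q -> iso Q P)
    & (* identity preserved *)
      (forall Q : sgraph S, pruned_retract (gtriv S) Q -> iso Q (gtriv S))].
Proof.
split.
- by move=> P treeP prP; exists P; split; last split; last exact: retract_of_refl.
- move=> X Y _ _ PX PY P Q [_ rX] [_ rY] rP rQ.
  apply: pruned_retract_iso rQ rP.
  exact: hom_equiv_gprod (retract_hom_equiv rX) (retract_hom_equiv rY).
- move=> X _ PX P Q [_ rX] rP rQ.
  exact: pruned_retract_iso (hom_equiv_gplus (retract_hom_equiv rX)) rQ rP.
- move=> X _ PX P Q [_ rX] rP rQ.
  exact: pruned_retract_iso (hom_equiv_gstar (retract_hom_equiv rX)) rQ rP.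
- move=> Q rQ; apply: pruned_retract_iso (hom_equiv_refl _) rQ _.
  by split; [exact: pruned_gtriv | exact: retract_of_refl].
Qed.
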